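(* Let $n\geq7$ and let $u,v\in G(J(P_{n-5}))$. If $uv\in G(J(P_{n-5})^2)$, then $(x_{n-1}x_{n-2}x_{n-4}u)(x_nx_{n-2}x_{n-4}v)\in G(J(P_n)^2)$.
   Context: For $m\geq1$, $P_m$ is the path graph on vertices $x_1,\ldots,x_m$ with edges $\{x_i,x_{i+1}\}$; $J(P_m)$ is its cover ideal in a polynomial ring over a field, generated by the monomials $\prod_{x\in C}x$ with $C$ a minimal vertex cover of $P_m$; $G(I)$ denotes the set of minimal monomial generators of a monomial ideal $I$. *)

From mathcomp Require Import all_boot.
Set Implicit Arguments. Unset Strict Implicit. Unset Printing Implicit Defensive.

(* A monomial x_1^{a_1} x_2^{a_2} ... is represented by its exponent vector
   a : nat -> nat (the exponent of x_i is a i; only finitely many nonzero in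
   practice).  Monomials are compared pointwise. *)
Definition mono := nat -> nat.

Definition meq (a b : mono) : Prop := forall i, a i = b i.
Definition mdvd (a b : mono) : Prop := forall i, a i <= b i.
Definition mmul (a b : mono) : mono := fun i => a i + b i.
Definition var (i : nat) : mono := fun j => nat_of_bool (j == i).

(* The path graph P_m on vertices x_1..x_m with edges {x_i, x_{i+1}}. *)
Definition is_vcover (m : nat) (C : nat -> bool) : Prop :=
  (forall i, C i -> 1 <= i <= m) /\
  (forall i, 1 <= i -> i < m -> C i || C i.+1).

Definition is_min_vcover (m : nat) (C : nat -> bool) : Prop :=
  is_vcover m C /\
  forall D : nat -> bool, is_vcover m D -> (forall i, D i -> C i) ->
    forall i, C i -> D i.

Definition Jgens (m : nat) (u : mono) : Prop :=
  exists C, is_min_vcover m C /\ forall i, u i = nat_of_bool (C i).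

Definition J2gens (m : nat) (w : mono) : Prop :=
  exists u v, Jgens m u /\ Jgens m v /\ meq w (mmul u v).

Definition monideal (S : mono -> Prop) (w : mono) : Prop :=
  exists s, S s /\ mdvd s w.

Definition mingen (I : mono -> Prop) (w : mono) : Prop :=
  I w /\ forall w', I w' -> mdvd w' w -> meq w' w.

Definition J (m : nat) := monideal (Jgens m).
Definition J2 (m : nat) := monideal (J2gens m).

(* Put m = n - 5 and write u = x_Cu, v = x_Cv for vertex covers Cu, Cv of P_m.
   The two factors are x_U and x_V for the covers U = Cu + {m+1, m+3, m+4} and
   V = Cv + {m+1, m+3, m+5} of P_(m+5), so w = x_U x_V lies in J(P_(m+5))^2.
   Conversely, let x_A x_B divide w for covers A, B of P_(m+5).  Below m + 1
   the truncations of A and B are covers of P_m whose product divides uv, hence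
   equals uv by minimality.  Since x_(m+2) does not divide w, both A and B
   contain m+1 and m+3, and the edge {m+4, m+5} forces each of A, B to meet
   {m+4, m+5}, which w only allows once each.  So x_A x_B = w. *)

From mathcomp Require Import all_boot zify.
From Stdlib Require Import Classical FunctionalExtensionality.
Set Implicit Arguments. Unset Strict Implicit. Unset Printing Implicit Defensive.

Definition mono_of (C : nat -> bool) : mono := fun i => C i.

Lemma meq_eq (a b : mono) : meq a b -> a = b.
Proof. exact: functional_extensionality. Qed.

Lemma mingen_monideal (S : mono -> Prop) (w : mono) :
  mingen (monideal S) w -> S w.
Proof.
case=> [[s [Ss sw]] minw].
have Is : monideal S s by exists s; split=> // i.
by rewrite -(meq_eq (minw s Is sw)).
Qed.

Lemma vcover_le m C i : is_vcover m C -> C i -> i <= m.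
Proof. by case=> supp _ /supp /andP[]. Qed.

Definition nverts (m : nat) (C : nat -> bool) := #|[set i : 'I_m.+1 | C i]|.

Lemma nverts_lt m (C D : nat -> bool) i :
  subpred D C -> C i -> ~~ D i -> i <= m -> nverts m D < nverts m C.
Proof.
move=> DC Ci nDi leim; apply: proper_card; apply/properP; split.
  by apply/subsetP=> j; rewrite !inE; apply: DC.
by exists (Ordinal (leim : i < m.+1)); rewrite !inE.
Qed.

Lemma vcover_sub_min m C :
  is_vcover m C -> exists C0, is_min_vcover m C0 /\ subpred C0 C.
Proof.
have [k] := ubnP (nverts m C); elim: k C => [|k IH] C; rewrite ?ltn0 // => ltCk hC.
have [minC | nminC] := classic (is_min_vcover m C); first by exists C; split.
have [D [hD [DC [i [Ci nDi]]]]] :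
    exists D, is_vcover m D /\ subpred D C /\ exists i, C i /\ ~~ D i.
  apply: NNPP => noD; apply: nminC; split=> // D hD DC i Ci.
  by apply: contraT => nDi; case: noD; exists D; do 2 split=> //; exists i.
have ltDC := nverts_lt DC Ci nDi (vcover_le hC Ci).
have [C0 [minC0 C0D]] := IH D (leq_trans ltDC ltCk) hD.
by exists C0; split=> // j /C0D /DC.
Qed.

Lemma vcover_J m C : is_vcover m C -> J m (mono_of C).
Proof.
case/vcover_sub_min=> C0 [minC0 C0C]; exists (mono_of C0); split.
  by exists C0.
by move=> i; rewrite /mono_of; case: (C0 i) (C0C i) => // ->.
Qed.

Lemma mingen_J m u : mingen (J m) u -> exists2 C, is_vcover m C & u = mono_of C.
Proof.
by case/mingen_monideal=> C [[hC _] uC]; exists C => //; apply: meq_eq.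
Qed.

Lemma J2_mul m a b : J m a -> J m b -> J2 m (mmul a b).
Proof.
move=> [a0 [ga aa]] [b0 [gb bb]]; exists (mmul a0 b0); split.
  by exists a0, b0.
by move=> i; apply: leq_add.
Qed.

Lemma J2_vcovers m w : J2 m w ->
  exists A B, [/\ is_vcover m A, is_vcover m B &
                  mdvd (mmul (mono_of A) (mono_of B)) w].
Proof.
move=> [s [[a [b [[A [[hA _] eA]] [[B [[hB _] eB]] es]]]] sw]].
exists A, B; split=> // i; rewrite (meq_eq es) in sw.
by have := sw i; rewrite /mmul eA eB.
Qed.

Definition restrict (k : nat) (C : nat -> bool) : nat -> bool :=
  fun i => C i && (i <= k).

Lemma vcover_restrict m k C :
  k <= m -> is_vcover m C -> is_vcover k (restrict k C).
Proof.
move=> lekm [supp edge]; split=> [i /andP[/supp] | i ge1i ltik]; first lia.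
rewrite /restrict; case/orP: (edge i ge1i (leq_trans ltik lekm)) => ->; lia.
Qed.

Definition extend (m : nat) (C : nat -> bool) (c : nat) : nat -> bool :=
  fun i => [|| C i, i == m + 1, i == m + 3 | i == c].

Section Extend.
Variables (m c : nat) (C : nat -> bool).
Hypothesis hC : is_vcover m C.

Lemma extend_below i : i <= m -> m + 3 < c -> extend m C c i = C i.
Proof. by move=> leim ltc; rewrite /extend; repeat case: eqP => [?|?]; lia. Qed.

Lemma extend_above i :
  m < i -> extend m C c i = [|| i == m + 1, i == m + 3 | i == c].
Proof.
move=> ltmi; rewrite /extend; case: (boolP (C i)) => [/(vcover_le hC) | _ //].
lia.
Qed.

Lemma vcover_extend : m + 4 <= c <= m + 5 -> is_vcover (m + 5) (extend m C c).
Proof.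
move=> hc; have [supp edge] := hC; split=> i.
  by case/or4P=> [/supp | /eqP-> | /eqP-> | /eqP->]; lia.
move=> ge1i lti; rewrite /extend; case: (ltnP i m) => [ltim | leim].
  by case/orP: (edge i ge1i ltim) => ->; rewrite ?orbT.
repeat case: eqP => [?|?]; rewrite ?orbT //; lia.
Qed.

Lemma mono_of_extend : m + 3 < c ->
  mono_of (extend m C c) =
    mmul (mmul (mmul (var c) (var (m + 3))) (var (m + 1))) (mono_of C).
Proof.
move=> ltc; apply: meq_eq => i; rewrite /mono_of /mmul /var /extend.
by case: (C i) (vcover_le hC (i := i)) => [/(_ isT) leim | _];
  repeat case: eqP => [?|?]; lia.
Qed.

End Extend.

Section TwoExtensions.
Variables (m : nat) (Cu Cv : nat -> bool).
Hypotheses (hCu : is_vcover m Cu) (hCv : is_vcover m Cv).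
Hypothesis minuv : mingen (J2 m) (mmul (mono_of Cu) (mono_of Cv)).

Let w := mmul (mono_of (extend m Cu (m + 4))) (mono_of (extend m Cv (m + 5))).

Lemma extend2_below i : i <= m -> w i = Cu i + Cv i.
Proof. by move=> leim; rewrite /w /mmul /mono_of !extend_below //; lia. Qed.

Lemma extend2_above i : m < i ->
  w i = ((i == m + 1) + (i == m + 3)).*2 + (i == m + 4) + (i == m + 5).
Proof.
move=> ltmi; rewrite /w /mmul /mono_of !extend_above //.
by repeat case: eqP => [?|?]; lia.
Qed.

Section Bounds.
Variables A B : nat -> bool.
Hypotheses (hA : is_vcover (m + 5) A) (hB : is_vcover (m + 5) B).
Hypothesis ABw : mdvd (mmul (mono_of A) (mono_of B)) w.

Lemma extend2_le_below i : i <= m -> w i <= A i + B i.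
Proof.
move=> leim; set a := restrict m A; set b := restrict m B.
have ab_uv : mdvd (mmul (mono_of a) (mono_of b)) (mmul (mono_of Cu) (mono_of Cv)).
  move=> j; rewrite /mmul /mono_of /a /b /restrict.
  case: (leqP j m) => [lejm | ltmj]; last by rewrite !andbF.
  by rewrite !andbT -extend2_below //; apply: ABw.
have J2ab : J2 m (mmul (mono_of a) (mono_of b)).
  by apply: J2_mul; apply: vcover_J; apply: (vcover_restrict (m := m + 5)) => //; lia.
have := proj2 minuv _ J2ab ab_uv i.
by rewrite /mmul /mono_of /a /b /restrict leim !andbT extend2_below // => ->.
Qed.

Lemma extend2_le_above i : m < i -> w i <= A i + B i.
Proof.
move=> ltmi; have [k ->] : exists k, i = m + k.+1 by exists (i - m).-1; lia.
have w_shift j : w (m + j.+1) =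
    ((j.+1 == 1) + (j.+1 == 3)).*2 + (j.+1 == 4) + (j.+1 == 5).
  by rewrite extend2_above ?eqn_add2l //; lia.
have AB_le j : A (m + j.+1) + B (m + j.+1) <= w (m + j.+1) by apply: ABw.
have edge (C : nat -> bool) : is_vcover (m + 5) C -> forall j, j < 4 ->
    C (m + j.+1) || C (m + j.+2).
  by case=> _ edgeC j ltj4; rewrite [m + j.+2]addnS; apply: edgeC; lia.
have [A2 B2] : A (m + 2) = false /\ B (m + 2) = false.
  by move: (AB_le 1); rewrite w_shift; case: (A _); case: (B _).
have /andP[A1 A3] : A (m + 1) && A (m + 3).
  by move: (edge A hA 0 isT) (edge A hA 1 isT); rewrite A2 /= orbF => -> ->.
have /andP[B1 B3] : B (m + 1) && B (m + 3).
  by move: (edge B hB 0 isT) (edge B hB 1 isT); rewrite B2 /= orbF => -> ->.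
rewrite w_shift; case: k => [|[|[|[|[|k]]]]] //=; rewrite ?A1 ?B1 ?A3 ?B3 //.
all: move: (edge A hA 3 isT) (edge B hB 3 isT) (AB_le 3) (AB_le 4).
all: rewrite !w_shift /=; lia.
Qed.

End Bounds.

Lemma mingen_extend2 : mingen (J2 (m + 5)) w.
Proof.
split.
  by apply: J2_mul; apply: vcover_J; apply: vcover_extend => //; lia.
move=> w' /J2_vcovers[A [B [hA hB ABw']]] w'w.
have ABw : mdvd (mmul (mono_of A) (mono_of B)) w.
  by move=> i; apply: leq_trans (ABw' i) (w'w i).
have wAB i : w i <= A i + B i.
  by case: (leqP i m) => [/extend2_le_below | /extend2_le_above]; apply.
by move=> i; apply/eqP; rewrite eqn_leq w'w; apply: leq_trans (wAB i) (ABw' i).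
Qed.

End TwoExtensions.

Theorem lemma3p14 (n : nat) (u v : mono) :
  7 <= n ->
  mingen (J (n - 5)) u -> mingen (J (n - 5)) v ->
  mingen (J2 (n - 5)) (mmul u v) ->
  mingen (J2 n)
    (mmul (mmul (mmul (mmul (var n.-1) (var (n - 2))) (var (n - 4))) u)
          (mmul (mmul (mmul (var n) (var (n - 2))) (var (n - 4))) v)).
Proof.
move=> le7n; have [m ->] : exists m, n = m + 5 by exists (n - 5); lia.
rewrite addnK => /mingen_J[Cu hCu ->] /mingen_J[Cv hCv ->] minuv.
have -> : (m + 5).-1 = m + 4 by lia.
have -> : m + 5 - 2 = m + 3 by lia.
have -> : m + 5 - 4 = m + 1 by lia.
by rewrite -!mono_of_extend ?ltn_add2l //; apply: mingen_extend2.
Qed.
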